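(* For every map $M$, $V\cap F\subseteq Z$.
   Context: A map is a triple $M=(C_M,v_M,f_M)$ where $C_M$ is a finite cubic graph (multiple edges allowed) and $v_M,f_M$ are disjoint perfect matchings whose union is a disjoint union of 4-cycles, the squares of $M$ (set $SQ(M)$). $a_M=E(C_M)\setminus(v_M\cup f_M)$; $z_M$ is the perfect matching on $V(C_M)$ formed by the diagonals of the squares; $Q_M=C_M\cup z_M$. For a map $X$, $G_X$ has as vertices the cycles of $v_X\cup a_X$, as edges the squares of $X$, each square joining the cycles containing its two $v_X$-edges. The dual is $D=(C_M,f_M,v_M)$, the phial is $P=(Q_M\setminus v_M,z_M,f_M)$, and edge sets of $G_M,G_D,G_P$ are identified with $SQ(M)$. $V,F,Z$ are the coboundary (edge-cut) spaces over $GF(2)$ of $G_M,G_D,G_P$, viewed as sets of subsets of $SQ(M)$. *)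

From mathcomp Require Import all_boot.
Set Implicit Arguments. Unset Strict Implicit. Unset Printing Implicit Defensive.

(* Encoding of a map M = (C_M, v_M, f_M) on the vertex set T of C_M.
   Each of v_M, f_M, a_M is a perfect matching of C_M, represented by the
   fixed-point-free involution sending a vertex to its partner.  The cubic
   multigraph C_M has edge set v_M ⊎ f_M ⊎ a_M (edges of different classes
   are different edges, so parallel edges are allowed; loops cannot occur).
   The condition "v_M ∪ f_M is a disjoint union of 4-cycles" says that every
   connected component of the 2-regular graph v_M ∪ f_M has exactly 4
   vertices. *)

Section Generic.
Variable T : finType.

Definition rel2 (g h : T -> T) : rel T := fun x y => (y == g x) || (y == h x).

Definition comp2 (g h : T -> T) (x : T) : {set T} := [set y | connect (rel2 g h) x y].

(* For a map X = (C, p, q) with remaining matching a, the graph G_X: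
   - vertices: the cycles of p ∪ a,
   - edges: the squares of X (components of p ∪ q),
   - a square s joins the cycles containing its two p-edges; for x ∈ s the
     two p-edges of s are {x, p x} and {q x, p (q x)}. *)
Variables (p q a : T -> T).

Definition Gverts : {set {set T}} := [set comp2 p a x | x in T].
Definition Gedges : {set {set T}} := [set comp2 p q x | x in T].
Definition Gend (x : T) : {set T} := comp2 p a x.

(* the edge cut (coboundary) of a vertex set S of G_X: the squares having
   exactly one of their two p-edges in a cycle belonging to S *)
Definition Gcut (S : {set {set T}}) : {set {set T}} :=
  [set s in Gedges | [exists x in s, (Gend x \in S) != (Gend (q x) \in S)]].

Definition in_cut_space (X : {set {set T}}) : Prop :=
  exists2 S : {set {set T}}, S \subset Gverts & X = Gcut S.
End Generic.

Record gmap (T : finType) := Map {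
  mv : T -> T;
  mf : T -> T;
  ma : T -> T;
  mv_invol : involutive mv;
  mf_invol : involutive mf;
  ma_invol : involutive ma;
  mv_fpf : forall x, mv x != x;
  mf_fpf : forall x, mf x != x;
  ma_fpf : forall x, ma x != x;
  sq4 : forall x, #|comp2 mv mf x| = 4
}.

(* z_M: the diagonal partner of x in its square x - v x - f(v x) - v(f(v x)) - x *)
Definition mz (T : finType) (M : gmap T) (x : T) : T := mf M (mv M x).

Definition squares (T : finType) (M : gmap T) : {set {set T}} := Gedges (mv M) (mf M).

Definition Vspace (T : finType) (M : gmap T) (X : {set {set T}}) : Prop :=
  in_cut_space (mv M) (mf M) (ma M) X.
Definition Fspace (T : finType) (M : gmap T) (X : {set {set T}}) : Prop :=
  in_cut_space (mf M) (mv M) (ma M) X.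
(* Z: coboundary space of G_P, P = (Q \ v, z, f), remaining matching
   (a ∪ f ∪ z) \ (z ∪ f) = a; the squares of P (components of z ∪ f) are the
   same vertex sets as the squares of M, which gives the identification. *)
Definition Zspace (T : finType) (M : gmap T) (X : {set {set T}}) : Prop :=
  in_cut_space (mz M) (mf M) (ma M) X.

From mathcomp Require Import all_boot.
Set Implicit Arguments. Unset Strict Implicit. Unset Printing Implicit Defensive.

(* A set S of vertices of G_M is recorded by the indicator al of "the cycle of
   v ∪ a through x lies in S", which is constant on those cycles; the square
   through x is in the cut of S iff al x != al (f x).  If X is also the cut of
   a vertex set of G_D with indicator be, then al x + al (f x) = be x + be (v x)
   for all x.  Squares being 4-cycles, v and f commute, and the identity says
   precisely that al + be is invariant under z = f v; it is also invariant
   under a, so it is the indicator of a vertex set of G_P, whose cut is X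
   because be (f x) = be x. *)

Section Components.
Variables (T : finType) (g h : T -> T).

Lemma comp2C : comp2 g h =1 comp2 h g.
Proof.
move=> x; apply/setP=> y; rewrite !inE.
by apply: eq_connect => u w; rewrite /rel2 orbC.
Qed.

Lemma mem_comp2 x : x \in comp2 g h x.
Proof. by rewrite inE connect0. Qed.

Lemma mem_comp2l x y : y \in comp2 g h x -> g y \in comp2 g h x.
Proof. by rewrite !inE => /connect_trans; apply; rewrite connect1 // /rel2 eqxx. Qed.

Lemma mem_comp2r x y : y \in comp2 g h x -> h y \in comp2 g h x.
Proof.
by rewrite !inE => /connect_trans; apply; rewrite connect1 // /rel2 eqxx orbT.
Qed.

Lemma comp2_const (c : T -> bool) :
    (forall x, c (g x) = c x) -> (forall x, c (h x) = c x) ->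
  forall x y, y \in comp2 g h x -> c y = c x.
Proof.
move=> cg ch x y; rewrite inE => /connectP[s + ->] {y}.
by elim: s x => //= y s IHs x /andP[/orP[]/eqP-> /IHs->].
Qed.

Hypotheses (g_invol : involutive g) (h_invol : involutive h).

Lemma connect_rel2_sym : connect_sym (rel2 g h).
Proof.
apply: sym_connect_sym => x y.
by rewrite /rel2 (eq_sym y) (eq_sym y) (inv_eq g_invol) (inv_eq h_invol).
Qed.

Lemma comp2_eq x y : y \in comp2 g h x -> comp2 g h y = comp2 g h x.
Proof.
rewrite inE => xy; apply/setP=> z; rewrite !inE.
by rewrite (same_connect connect_rel2_sym xy).
Qed.

Lemma comp2_stepl x : comp2 g h (g x) = comp2 g h x.
Proof. exact/comp2_eq/mem_comp2l/mem_comp2. Qed.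

Lemma comp2_stepr x : comp2 g h (h x) = comp2 g h x.
Proof. exact/comp2_eq/mem_comp2r/mem_comp2. Qed.

Lemma comp2_comp : comp2 (fun x => h (g x)) h =1 comp2 g h.
Proof.
move=> x; apply/setP=> y; rewrite !inE; apply/idP/idP; apply: connect_sub => u w.
  case/orP=> /eqP->; rewrite -inE.
    exact/mem_comp2r/mem_comp2l/mem_comp2.
  exact/mem_comp2r/mem_comp2.
case/orP=> /eqP->; last by rewrite connect1 // /rel2 eqxx orbT.
rewrite -[g u]h_invol; apply: (connect_trans (y := h (g u))).
  by rewrite connect1 // /rel2 eqxx.
by rewrite connect1 // /rel2 eqxx orbT.
Qed.

Lemma comm_comp_involutive :
  (forall x, g (h x) = h (g x)) -> involutive (fun x => h (g x)).
Proof. by move=> gh x /=; rewrite -gh h_invol g_invol. Qed.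

Lemma comp2_card_le4_comm x :
    (forall y, g y != y) -> (forall y, h y != y) -> #|comp2 g h x| <= 4 ->
  g (h x) = h (g x).
Proof.
move=> g_fpf h_fpf; apply: contraTeq => ne; rewrite -ltnNge.
have gh : g x != h x.
  by apply: contra ne => /eqP e; rewrite -{1}e g_invol e h_invol.
have s_uniq : uniq [:: x; g x; h x; h (g x); g (h x)].
  have := (g_fpf x, h_fpf x, g_fpf (h x), h_fpf (g x)) => -[[[gx hx] ghx] hgx].
  rewrite /= !inE !negb_or; do !(apply/andP; split);
    first [ by [] | by rewrite eq_sym
          | by rewrite (inj_eq (inv_inj g_invol)) eq_sym
          | by rewrite (inj_eq (inv_inj h_invol)) eq_sym
          | by rewrite eq_sym (inv_eq g_invol) eq_sym
          | by rewrite eq_sym (inv_eq h_invol) ].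
have s_sub : {subset [:: x; g x; h x; h (g x); g (h x)] <= comp2 g h x}.
  apply/allP; rewrite /= andbT; do !(apply/andP; split);
    do ?[apply: mem_comp2l | apply: mem_comp2r]; exact: mem_comp2.
apply: leq_trans (subset_leq_card (introT subsetP s_sub)).
by rewrite (card_uniqP s_uniq).
Qed.

End Components.

Definition cut_of (T : finType) (p q : T -> T) (c : T -> bool) : {set {set T}} :=
  [set comp2 p q x | x : T & c x != c (q x)].

Lemma eq_cut_of (T : finType) (p p' q : T -> T) (c c' : T -> bool) :
    comp2 p q =1 comp2 p' q -> (forall x, (c x != c (q x)) = (c' x != c' (q x))) ->
  cut_of p q c = cut_of p' q c'.
Proof.
move=> pp' cc'; apply/setP=> s.
by apply/imsetP/imsetP=> -[x]; rewrite inE => cx ->; exists x;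
  rewrite ?inE ?cc' ?pp' // -cc'.
Qed.

Section Cuts.
Variables (T : finType) (p q a : T -> T).
Hypotheses (p_invol : involutive p) (q_invol : involutive q).

Lemma Gcut_cut_of (S : {set {set T}}) :
  Gcut p q a S = cut_of p q (fun x => Gend p a x \in S).
Proof.
apply/setP=> s; rewrite inE; apply/andP/imsetP.
  case=> /imsetP[y _ ->] /existsP[x /andP[xy cx]].
  by exists x; rewrite ?inE // (comp2_eq p_invol q_invol xy).
case=> x; rewrite inE => cx ->; split; first exact: imset_f.
by apply/existsP; exists x; rewrite mem_comp2.
Qed.

Lemma mem_cut_of (c : T -> bool) x :
    (forall y, p (q y) = q (p y)) -> (forall y, c (p y) = c y) ->
  (comp2 p q x \in cut_of p q c) = (c x != c (q x)).
Proof.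
move=> pq cp; apply/imsetP/idP=> [[y]|cx]; last by exists x; rewrite ?inE.
rewrite inE => cy e; have := mem_comp2 p q x; rewrite e.
move/(comp2_const (c := fun y => c y != c (q y))) -> => // z.
  by rewrite -pq !cp.
by rewrite q_invol eq_sym.
Qed.

Hypothesis a_invol : involutive a.

Lemma in_cut_spaceP (X : {set {set T}}) :
  in_cut_space p q a X <->
  exists c : T -> bool,
    [/\ forall x, c (p x) = c x, forall x, c (a x) = c x & X = cut_of p q c].
Proof.
split=> [[S _ ->]|[c [cp ca ->]]].
  exists (fun x => Gend p a x \in S); split=> [x|x|]; rewrite ?Gcut_cut_of //.
    by rewrite /Gend comp2_stepl.
  by rewrite /Gend comp2_stepr.
exists [set comp2 p a x | x : T & c x].
  by apply/subsetP=> _ /imsetP[x _ ->]; exact: imset_f.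
rewrite Gcut_cut_of; apply: eq_cut_of => // x.
suff Sc y : (Gend p a y \in [set comp2 p a x | x : T & c x]) = c y by rewrite !Sc.
apply/imsetP/idP=> [[z]|cy]; last by exists y; rewrite ?inE.
rewrite /Gend inE => cz e; have := mem_comp2 p a y; rewrite e.
by move/(comp2_const cp ca) ->.
Qed.

End Cuts.

Lemma mv_mf_comm (T : finType) (M : gmap T) x : mv M (mf M x) = mf M (mv M x).
Proof.
apply: comp2_card_le4_comm (mv_invol M) (mf_invol M) _ (mv_fpf M) (mf_fpf M) _.
by rewrite sq4.
Qed.

Theorem theorem2p5 (T : finType) (M : gmap T) (X : {set {set T}}) :
  Vspace M X -> Fspace M X -> Zspace M X.
Proof.
have [v_invol f_invol a_invol] := And3 (mv_invol M) (mf_invol M) (ma_invol M).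
have vf := mv_mf_comm M.
move=> /(in_cut_spaceP v_invol f_invol a_invol) [al [alv ala ->]].
move=> /(in_cut_spaceP f_invol v_invol a_invol) [be [bef bea eX]].
have cutVF x : (al x != al (mf M x)) = (be x != be (mv M x)).
  rewrite -(mem_cut_of f_invol x vf alv) eX comp2C.
  by rewrite (mem_cut_of v_invol x (fun y => esym (vf y)) bef).
pose ga x := al x (+) be x.
have z_invol : involutive (mz M) by exact: comm_comp_involutive.
apply/(in_cut_spaceP z_invol f_invol a_invol); exists ga; split=> [x|x|].
- rewrite /ga /mz -vf alv vf bef; move: (cutVF x).
  by case: (al x) (al (mf M x)) (be x) (be (mv M x)) => [] [] [] [].
- by rewrite /ga ala bea.
- apply: eq_cut_of => x; first by rewrite /mz comp2_comp.
  by rewrite /ga bef; case: (al x) (al (mf M x)) (be x) => [] [] [].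
Qed.
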